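(* Let $X\in\{0,1\}$ be binary and let $Y_0$ be a real random variable such that: for each $x'\in\{0,1\}$, the conditional cdf of $Y_0$ given $X=x'$ is strictly increasing and continuous on its support; for each $x'\in\{0,1\}$ the support of $Y_0$ given $X=x'$ equals the support of $Y_0$, which is $[\underline{y}_0,\overline{y}_0]$ with $-\infty\le\underline{y}_0<\overline{y}_0\le\infty$; and $\Pr(X=x')>0$ for $x'\in\{0,1\}$. Let $\mathcal{T}=[a,b]\subseteq[\underline{y}_0,\overline{y}_0]$. If $Y_0$ is $\mathcal{T}$-independent of $X$, then \[ \Pr(X=1\mid Y_0=y_0)=\Pr(X=1) \] for almost all $y_0\in\mathcal{T}$.
   Context: $Y_0$ is $\mathcal{T}$-independent of $X$ if $F_{Y_0\mid X}(\tau\mid 0)=F_{Y_0\mid X}(\tau\mid 1)$ for all $\tau\in\mathcal{T}$, where $F_{Y_0\mid X}(\cdot\mid x')$ is the conditional cdf of $Y_0$ given $X=x'$. *)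

From HB Require Import structures.
From mathcomp Require Import all_boot all_order all_algebra.
From mathcomp Require Import all_classical all_reals all_analysis.
Set Implicit Arguments. Unset Strict Implicit. Unset Printing Implicit Defensive.
Import Order.TTheory GRing.Theory Num.Theory.
Import numFieldNormedType.Exports.
Local Open Scope classical_set_scope.
Local Open Scope ring_scope.

Definition cond_cdf d (T : measurableType d) (R : realType)
  (P : probability T R) (Y X : T -> R) (x : R) (tau : R) : R :=
  fine (P (Y @^-1` `]-oo, tau] `&` X @^-1` [set x])) /
  fine (P (X @^-1` [set x])).

Definition cond_law d (T : measurableType d) (R : realType)
  (P : probability T R) (Y X : T -> R) (x : R) : set R -> \bar R :=
  fun B => (P (Y @^-1` B `&` X @^-1` [set x]) *
            ((fine (P (X @^-1` [set x])))^-1)%:E)%E.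

Definition msupport (R : realType) (mu : set R -> \bar R) : set R :=
  [set y : R | forall e : R, 0 < e -> (0%E < mu (`](y - e)%R, (y + e)%R[%classic))%E].

Definition cond_prob_version d (T : measurableType d) (R : realType)
  (P : probability T R) (Y : {RV P >-> R}) (A : set T) (g : R -> R) : Prop :=
  measurable_fun setT g /\
  forall B : set R, measurable B ->
    P (Y @^-1` B `&` A) = (\int[distribution P Y]_(y in B) (g y)%:E)%E.

Definition T_independent d (T : measurableType d) (R : realType)
  (P : probability T R) (Y X : T -> R) (Tset : set R) : Prop :=
  forall tau, Tset tau -> cond_cdf P Y X 0 tau = cond_cdf P Y X 1 tau.
Arguments cond_prob_version {d T R} P Y A g.

From HB Require Import structures.
From mathcomp Require Import all_boot all_order all_algebra.
From mathcomp Require Import all_classical all_reals all_analysis.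
Import Order.TTheory GRing.Theory Num.Theory.
Import numFieldNormedType.Exports.
Local Open Scope classical_set_scope.
Local Open Scope ring_scope.

(* Since X is binary, equality of the two conditional cdfs of Y0 at tau says
   exactly that the event {X = 1} is independent of {Y0 <= tau}. Letting tau
   range over [a, b] gives independence from {s < Y0 <= t} for a <= s <= t <= b,
   and then, by uniqueness of finite measures agreeing on half-open intervals,
   from {Y0 in E} for every Borel E included in ]a, b]. So the version g of
   P(X = 1 | Y0) integrates like the constant P(X = 1) over each such E, hence
   equals it almost everywhere on ]a, b]. The endpoint a is not an atom of Y0,
   because a lies in the common support, where both conditional cdfs are
   continuous. *)

#[local] Hint Extern 0 (measurable (_ @^-1` _)) =>
  solve [apply: measurable_funPTI; done] : core.
#[local] Hint Extern 0 (measurable (_ `&` _)) =>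
  solve [apply: measurableI; done] : core.

Section probability_events.
Context {d} {T : measurableType d} {R : realType} (P : probability T R).

Lemma probability_fineK {A : set T} : measurable A -> P A = (fine (P A))%:E.
Proof. by move=> mA; rewrite fineK // fin_num_measure. Qed.

Lemma fine_measureU (A B : set T) : measurable A -> measurable B ->
  A `&` B = set0 -> fine (P (A `|` B)) = fine (P A) + fine (P B).
Proof. by move=> mA mB AB0; rewrite measureU // fineD // fin_num_measure. Qed.

Definition indep_events (A B : set T) := P (A `&` B) = (P A * P B)%E.

Lemma indep_eventsE (A B : set T) : measurable A -> measurable B ->
  indep_events A B <-> fine (P (A `&` B)) = fine (P A) * fine (P B).
Proof.
move=> mA mB; rewrite /indep_events (probability_fineK (measurableI _ _ mA mB)).
rewrite (probability_fineK mA) (probability_fineK mB) /= -EFinM.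
by split=> [[]|->].
Qed.

Lemma indep_events_of_setU (A B C : set T) :
  measurable A -> measurable B -> measurable C -> A `&` B = set0 ->
  indep_events (A `|` B) C -> indep_events A C -> indep_events B C.
Proof.
move=> mA mB mC AB0; have mAC := measurableI _ _ mA mC.
have mBC := measurableI _ _ mB mC.
have ACBC0 : (A `&` C) `&` (B `&` C) = set0 by rewrite setIACA AB0 set0I.
have mAB := measurableU _ _ mA mB.
rewrite !indep_eventsE // setIUl !fine_measureU //.
move=> ABCE ACE; apply: (addrI (fine (P (A `&` C)))).
by rewrite ABCE ACE mulrDl.
Qed.

End probability_events.

Lemma itvNyc_setU {R : realType} {y z : R} : y <= z ->
  `]-oo, z]%classic = `]-oo, y]%classic `|` `]y, z]%classic :> set R.
Proof. by move=> yz; apply: itv_bndbnd_setU; rewrite bnd_simp. Qed.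

Lemma itvNyc_itvoc_disjoint {R : realType} (y z : R) :
  `]-oo, y]%classic `&` `]y, z]%classic = set0 :> set R.
Proof.
apply/eqP/lt_disjoint => u v; rewrite !in_itv /= => uy /andP[yv _].
exact: le_lt_trans uy yv.
Qed.

Section conditional_cdf.
Context {d} {T : measurableType d} {R : realType} {P : probability T R}.
Context {X Y : {RV P >-> R}}.

Lemma cond_cdfE (x tau : R) : (0 < P (X @^-1` [set x]))%E ->
  cond_cdf P Y X x tau * fine (P (X @^-1` [set x])) =
  fine (P (Y @^-1` `]-oo, tau] `&` X @^-1` [set x])).
Proof.
have mX : measurable (X @^-1` [set x]) by [].
rewrite (probability_fineK P mX) lte_fin /=.
by move=> px_gt0; rewrite /cond_cdf mulfVK ?gt_eqF.
Qed.

Lemma cond_cdfB (x y z : R) : (0 < P (X @^-1` [set x]))%E -> y <= z ->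
  (cond_cdf P Y X x z - cond_cdf P Y X x y) * fine (P (X @^-1` [set x])) =
  fine (P (Y @^-1` `]y, z] `&` X @^-1` [set x])).
Proof.
move=> px_gt0 yz; rewrite mulrBl !cond_cdfE // (itvNyc_setU yz).
rewrite preimage_setU setIUl fine_measureU //; first by rewrite addrC addKr.
by rewrite setIACA -preimage_setI itvNyc_itvoc_disjoint preimage_set0 set0I.
Qed.

Lemma cond_cdf_continuous_atom0 (x a : R) : (0 < P (X @^-1` [set x]))%E ->
  {for a, continuous (cond_cdf P Y X x : R -> R)} ->
  P (Y @^-1` [set a] `&` X @^-1` [set x]) = 0%E.
Proof.
move=> px_gt0 Fa_cont; set F := cond_cdf P Y X x.
have mYaX : measurable (Y @^-1` [set a] `&` X @^-1` [set x]) by [].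
have atom_le y : y < a ->
    fine (P (Y @^-1` [set a] `&` X @^-1` [set x])) <=
    (F a - F y) * fine (P (X @^-1` [set x])).
  move=> ya; rewrite cond_cdfB ?(ltW ya) //.
  apply: fine_le; rewrite ?fin_num_measure //.
  apply: le_measure; rewrite ?inE //.
  by move=> t [/= -> Xt]; split => //=; rewrite in_itv /= ya lexx.
have F_left : (F a - F y) * fine (P (X @^-1` [set x])) @[y --> a^'-] --> 0.
  rewrite -(mul0r (fine (P (X @^-1` [set x])))) -(subrr (F a)).
  apply: cvgMl; apply: cvgB; [exact: cvg_cst | exact: cvg_at_left_filter].
rewrite (probability_fineK P mYaX); congr EFin; apply/eqP; rewrite eq_le.
rewrite fine_ge0 ?measure_ge0 // andbT.
apply: (cvgr_to_ge F_left); near=> y; apply: atom_le.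
by near: y; exact: nbhs_left_lt.
Unshelve. all: by end_near.
Qed.

Hypothesis X01 : forall t, X t = 0 \/ X t = 1.

Lemma fine_measure_binary_split {A : set T} : measurable A ->
  fine (P A) =
  fine (P (A `&` X @^-1` [set 0])) + fine (P (A `&` X @^-1` [set 1])).
Proof.
move=> mA; rewrite -fine_measureU //; last first.
  apply/seteqP; split => t // [[_ /= Xt0] [_ /=]].
  by rewrite Xt0 => /eqP; rewrite eq_sym oner_eq0.
by rewrite -setIUr setIidl // => t _; exact: X01.
Qed.

Lemma indep_events_of_cond_cdf_eq (tau : R) :
  (0 < P (X @^-1` [set 0%R]))%E -> (0 < P (X @^-1` [set 1%R]))%E ->
  cond_cdf P Y X 0 tau = cond_cdf P Y X 1 tau ->
  indep_events P (Y @^-1` `]-oo, tau]) (X @^-1` [set 1]).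
Proof.
move=> PX0_gt0 PX1_gt0 F01; apply/indep_eventsE => //.
have PX01 := fine_measure_binary_split measurableT.
rewrite !setTI probability_setT /= in PX01.
rewrite (fine_measure_binary_split (A := Y @^-1` `]-oo, tau]%classic)) //.
by rewrite -!cond_cdfE // F01 -mulrDr -PX01 mulr1.
Qed.

Lemma distribution_atom0 (a : R) :
  (0 < P (X @^-1` [set 0%R]))%E -> (0 < P (X @^-1` [set 1%R]))%E ->
  {for a, continuous (cond_cdf P Y X 0 : R -> R)} ->
  {for a, continuous (cond_cdf P Y X 1 : R -> R)} ->
  distribution P Y [set a] = 0%E.
Proof.
move=> PX0_gt0 PX1_gt0 F0_cont F1_cont.
rewrite /distribution /pushforward (probability_fineK P) //.
by rewrite fine_measure_binary_split // !cond_cdf_continuous_atom0 //= addr0.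
Qed.

End conditional_cdf.

Lemma setI_itvoc {R : realType} (s t a b : R) :
  `]s, t]%classic `&` `]a, b]%classic =
  `](Num.max s a), (Num.min t b)]%classic :> set R.
Proof.
apply/seteqP; split => y /=; rewrite !in_itv /= gt_max le_min.
  by move=> [/andP[-> ->] /andP[-> ->]].
by move=> /andP[/andP[-> ->] /andP[-> ->]].
Qed.

Lemma measure_eq_ocitv {R : realType} (m1 m2 : {measure set R -> \bar R}) :
  (m1 setT < +oo)%E -> (forall s t : R, m1 `]s, t]%classic = m2 `]s, t]%classic) ->
  forall A, measurable A -> m1 A = m2 A.
Proof.
move=> m1_fin m12.
apply: (measure_unique (@ocitv R) (fun k => `]-k%:R, k%:R]%classic) erefl (@ocitvI R)).
- by move=> k; exact: is_ocitv.
- apply/seteqP; split => // x _; exists (Num.Def.archi_bound `|x|) => //=.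
  have := archi_boundP (normr_ge0 x); rewrite ltr_norml => /andP[Nx_lt x_lt].
  by rewrite in_itv /= Nx_lt ltW.
- by move=> _ [[s t] _ <-]; exact: m12.
- by move=> k; apply: le_lt_trans m1_fin; apply: le_measure; rewrite ?inE.
Qed.

Section independence_on_interval.
Context {d} {T : measurableType d} {R : realType} (P : probability T R).
Variables (Y : {RV P >-> R}) (C : set T) (a b : R).
Hypothesis mC : measurable C.

Lemma indep_events_itv_oc :
  (forall tau, a <= tau <= b -> indep_events P (Y @^-1` `]-oo, tau]) C) ->
  forall s t, a <= s -> t <= b -> indep_events P (Y @^-1` `]s, t]) C.
Proof.
move=> indepNy s t a_s t_b; have [st|ts] := leP s t; last first.
  rewrite set_itv_ge ?preimage_set0; last by rewrite bnd_simp -leNgt ltW.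
  by rewrite /indep_events set0I measure0 mul0e.
apply: (indep_events_of_setU P (Y @^-1` `]-oo, s])) => //.
- by rewrite -preimage_setI itvNyc_itvoc_disjoint preimage_set0.
- rewrite -preimage_setU -itvNyc_setU //; apply: indepNy.
  by rewrite (le_trans a_s st) t_b.
- by apply: indepNy; rewrite a_s (le_trans st t_b).
Qed.

Lemma indep_events_sub_itv_oc :
  (forall s t, a <= s -> t <= b -> indep_events P (Y @^-1` `]s, t]) C) ->
  forall E, measurable E -> E `<=` `]a, b] -> indep_events P (Y @^-1` E) C.
Proof.
move=> indep_oc E mE Eab.
have mab : measurable (`]a, b]%classic : set R) by [].
pose PC : {nonneg R} := NngNum (fine_ge0 (measure_ge0 P C)).
(* Both sides are finite measures in E, restricted to ]a, b]. *)
suff : mrestr (pushforward (mrestr P mC) Y) mab E =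
       mscale PC (mrestr (distribution P Y) mab) E.
  rewrite /mscale /= /mrestr /distribution /pushforward (setIidl Eab).
  by rewrite /indep_events muleC -(probability_fineK P mC).
apply: measure_eq_ocitv => // [|s t].
  by rewrite /= /mrestr /pushforward (probability_fineK P) ?ltry.
rewrite /= /mscale /= /mrestr /distribution /pushforward setI_itvoc.
rewrite indep_oc ?le_max ?ge_min ?lexx ?orbT // muleC.
by rewrite -(probability_fineK P mC).
Qed.

End independence_on_interval.

Lemma ae_eq_cst_of_integral {d} {U : measurableType d} {R : realType}
    (mu : {finite_measure set U -> \bar R}) (D : set U) (g : U -> R) (c : R) :
  measurable D -> measurable_fun D g ->
  (forall E, E `<=` D -> measurable E ->
     (\int[mu]_(x in E) (g x)%:E = c%:E * mu E)%E) ->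
  {ae mu, forall x, D x -> g x = c}.
Proof.
move=> mD mg intg.
have : ae_eq mu D (EFin \o cst c) (EFin \o g).
  apply: integral_ae_eq => //.
  - exact: finite_measure_integrable_cst.
  - exact/measurable_realfun.measurable_EFinP.
  - by move=> E ED mE; rewrite (integral_cst _ mE c%:E) intg.
by apply: filterS => x /[apply] -[].
Qed.

Lemma ae_itvcc_of_itvoc {R : realType} (mu : {measure set R -> \bar R})
    (a b : R) (Q : R -> Prop) :
  mu [set a] = 0%E -> {ae mu, forall y, `]a, b]%classic y -> Q y} ->
  {ae mu, forall y, `[a, b]%classic y -> Q y}.
Proof.
move=> mu_a0; have neq_a : {ae mu, forall y, y != a}.
  by exists [set a]; split => // y /= /negP/negPn/eqP.
apply: filterS2 neq_a => y y_neq_a Qy; rewrite /= in_itv /= => /andP[ay yb].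
by apply: Qy; rewrite /= in_itv /= yb andbT lt_neqAle ay eq_sym y_neq_a.
Qed.

Theorem corollary4 (d : measure_display) (T : measurableType d) (R : realType)
  (P : probability T R) (X Y0 : {RV P >-> R})
  (ylo yhi : \bar R) (a b : R) :
  (forall t, X t = 0 \/ X t = 1) ->
  (forall x' : R, x' = 0 \/ x' = 1 -> (0 < P (X @^-1` [set x']))%E) ->
  (ylo < yhi)%E ->
  msupport (distribution P Y0) = [set y : R | ((ylo <= y%:E) && (y%:E <= yhi))%E] ->
  (forall x' : R, x' = 0 \/ x' = 1 ->
     msupport (cond_law P Y0 X x') = msupport (distribution P Y0)) ->
  (forall x' : R, x' = 0 \/ x' = 1 ->
     {in msupport (cond_law P Y0 X x') &, forall y z, y < z ->
        cond_cdf P Y0 X x' y < cond_cdf P Y0 X x' z} /\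
     (forall y, msupport (cond_law P Y0 X x') y ->
        {for y, continuous (cond_cdf P Y0 X x' : R -> R)})) ->
  (ylo <= a%:E)%E -> (b%:E <= yhi)%E ->
  T_independent P Y0 X `[a, b]%classic ->
  forall g : R -> R, cond_prob_version P Y0 (X @^-1` [set 1]) g ->
  {ae distribution P Y0, forall y0 : R, `[a, b]%classic y0 ->
     (g y0)%:E = P (X @^-1` [set 1])}.
Proof.
move=> X01 PX_gt0 _ supp cond_supp cond_cdf_props ylo_a b_yhi indep g [mg gint].
have [ab|ba] := leP a b; last first.
  apply: aeW => y; rewrite /= in_itv /= => /andP[ay yb].
  by have := lt_le_trans ba (le_trans ay yb); rewrite ltxx.
have PX0_gt0 := PX_gt0 0 (or_introl erefl).
have PX1_gt0 := PX_gt0 1 (or_intror erefl).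
have mX1 : measurable (X @^-1` [set 1]) by [].
have indep_ab E : measurable E -> E `<=` `]a, b] ->
    indep_events P (Y0 @^-1` E) (X @^-1` [set 1]).
  apply: indep_events_sub_itv_oc => //; apply: indep_events_itv_oc => // tau abtau.
  by apply: indep_events_of_cond_cdf_eq => //; apply: indep; rewrite /= in_itv.
have F_cont_a x' : x' = 0 \/ x' = 1 ->
    {for a, continuous (cond_cdf P Y0 X x' : R -> R)}.
  move=> x'01; apply: (cond_cdf_props x' x'01).2.
  by rewrite cond_supp // supp /= ylo_a (le_trans _ b_yhi) // lee_fin.
have g_cst : {ae distribution P Y0,
    forall y, `]a, b]%classic y -> g y = fine (P (X @^-1` [set 1]))}.
  apply: ae_eq_cst_of_integral => //; first exact: measurable_funS mg.
  move=> E Eab mE; rewrite -gint // indep_ab // muleC.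
  by rewrite -(probability_fineK P mX1).
have atom0 := distribution_atom0 X01 a PX0_gt0 PX1_gt0
  (F_cont_a 0 (or_introl erefl)) (F_cont_a 1 (or_intror erefl)).
apply: (ae_itvcc_of_itvoc _ _ b _ atom0).
apply: filterS g_cst => y /[apply] ->.
exact/esym/(probability_fineK P mX1).
Qed.
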